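(* Let $S\subset\mathbb{Z}_p$ be a set consisting of exactly $p$ points and let $\mu_S=\sum_{s\in S}\delta_s$, where $\delta_s$ is the Dirac measure at $s$. Then for $\xi\in\mathbb{Q}_p$, $\widehat{\mu_S}(\xi)=0$ if and only if $|(s-s')\xi|_p=p$ for all distinct $s,s'\in S$.
   Context: $\mathbb{Q}_p$ is the field of $p$-adic numbers ($p$ prime) with absolute value $|\cdot|_p$ and $\mathbb{Z}_p$ its ring of integers. For $x=\sum_{n\ge v}a_np^n$ ($a_n\in\{0,\dots,p-1\}$) its fractional part is $\{x\}=\sum_{n=v}^{-1}a_np^n$. Let $\chi(x)=e^{2\pi i\{x\}}$ and $\chi_y(x)=\chi(yx)$. The Fourier transform of a finite Borel measure $\mu$ on $\mathbb{Q}_p$ is $\widehat\mu(y)=\int_{\mathbb{Q}_p}\overline{\chi_y(x)}\,d\mu(x)$; in particular $\widehat{\mu_S}(\xi)=\sum_{s\in S}e^{-2\pi i\{s\xi\}}$. *)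

From Stdlib Require Import ClassicalEpsilon.
From mathcomp Require Import all_boot all_algebra all_classical all_reals all_analysis.
From mathcomp Require Import complex.
Import GRing.Theory Num.Theory.
Unset Printing Implicit Defensive.
Local Open Scope ring_scope.

(* p-adic integers Z_p as the projective limit of Z/p^n Z:                  *)
(* x : nat -> nat, where x n in [0, p^n) is the residue of x modulo p^n,   *)
(* and the residues are coherent.  Two coherent sequences are equal (as    *)
(* functions) iff they are the same p-adic integer.                         *)
Definition is_zp (p : nat) (x : nat -> nat) : Prop :=
  forall n : nat, (x n < p ^ n)%N /\ (x n.+1 %% p ^ n)%N = x n.

Definition zp_sub (p : nat) (x y : nat -> nat) : nat -> nat :=
  fun n => ((x n + (p ^ n - y n)) %% p ^ n)%N.
Definition zp_mul (p : nat) (x y : nat -> nat) : nat -> nat :=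
  fun n => ((x n * y n) %% p ^ n)%N.

Definition zp_val (x : nat -> nat) : nat :=
  match excluded_middle_informative (exists n : nat, x n.+1 != 0%N) with
  | left h => ex_minn h
  | right _ => 0%N
  end.

(* p-adic numbers: every xi in Q_p is p^(-qexp) * qunit with qunit in Z_p. *)
(* (Representations are not unique; all functions below depend only on    *)
(* the represented number.)                                                *)
Record QpRep := mkQp { qexp : nat; qunit : nat -> nat }.

Definition is_qp (p : nat) (xi : QpRep) : Prop := is_zp p (qunit xi).

Definition zq_mul (p : nat) (y : nat -> nat) (xi : QpRep) : QpRep :=
  mkQp (qexp xi) (zp_mul p y (qunit xi)).

(* fractional part {x} = sum_{n=v}^{-1} a_n p^n.  For x = p^(-k) u with u in
   Z_p this is (u mod p^k) / p^k, since the digits a_(-k) .. a_(-1) of x are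
   the base-p digits of u mod p^k. *)
Definition qp_frac (p : nat) (x : QpRep) : rat :=
  ((qunit x (qexp x))%:R) / ((p ^ qexp x)%N%:R).

(* p-adic absolute value |x|_p = p^(-v(x)); for x = p^(-k) u, v(x) = v(u) - k;
   |0|_p = 0. *)
Definition qp_abs (p : nat) (x : QpRep) : rat :=
  match excluded_middle_informative (exists n : nat, qunit x n.+1 != 0%N) with
  | left _ => (p%:R ^+ qexp x) / (p%:R ^+ zp_val (qunit x))
  | right _ => 0
  end.

Definition expi (R : realType) (t : R) : R[i] := (cos t +i* sin t)%C.
Definition chi (R : realType) (p : nat) (x : QpRep) : R[i] :=
  expi R (2 * pi * ratr (qp_frac p x)).

(* Fourier transform of mu_S = sum_{s in S} delta_s, S = {s_0,...,s_(p-1)}: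
   hat mu_S(xi) = sum_{s in S} conj (chi_xi (s)) = sum_s e^{-2 pi i {s xi}}. *)
Definition muS_hat (R : realType) (p : nat) (s : 'I_p -> nat -> nat)
    (xi : QpRep) : R[i] :=
  \sum_(i < p) (chi R p (zq_mul p (s i) xi))^*%C.

(* Write xi = p^-k u with u in Z_p.  Then {s xi} = b_s / p^k with b_s = s u mod p^k,
   so the Fourier transform is the conjugate of a sum of p powers z^(b_s) of a
   primitive p^k-th root of unity z, while |(s - s') xi|_p = p says exactly that
   b_s = b_s' mod p^(k-1) and b_s <> b_s'.  For k = 0 both sides fail.  For k > 0,
   the sum vanishes iff the minimal polynomial sum_(t < p) X^(t p^(k-1)) of z
   divides sum_s X^(b_s); comparing nonnegative coefficients, the quotient is a
   single monomial X^c, i.e. the b_s are distinct and all congruent to c modulo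
   p^(k-1). *)

From mathcomp Require Import all_boot all_algebra all_classical all_reals all_analysis.
From mathcomp Require Import complex cyclotomic algC.
From mathcomp Require Import zify ring lra.
Import GRing.Theory Num.Theory mathcomp.order.order.Order.TTheory.
Local Open Scope ring_scope.

Lemma sum_expr_eq0 (F : idomainType) (w : F) n :
  w ^+ n = 1 -> w != 1 -> \sum_(i < n) w ^+ i = 0.
Proof.
move=> wn w1; apply/eqP; have /eqP := subrX1 w n.
by rewrite wn subrr eq_sym mulf_eq0 subr_eq0 (negbTE w1).
Qed.

Lemma ler_sum_point {R : numDomainType} {I : finType} (F : I -> R) a :
  (forall i, 0 <= F i) -> F a <= \sum_i F i.
Proof. by move=> F0; rewrite (bigD1 a) //= lerDl sumr_ge0. Qed.

Lemma ler_sum_pair {R : numDomainType} {I : finType} (F : I -> R) a b :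
  (forall i, 0 <= F i) -> a != b -> F a + F b <= \sum_i F i.
Proof.
move=> F0 ab; rewrite (bigD1 a) //= (bigD1 b) 1?eq_sym //= addrA lerDl.
exact: sumr_ge0.
Qed.

(* For [M = p ^ k] with [p] prime this is the cyclotomic polynomial of
   order [p ^ k.+1]. *)
Definition pcyclo (p M : nat) : {poly rat} := \sum_(t < p) 'X^(t * M).

Lemma pcyclo_mulXnsub1 p M : pcyclo p M * ('X^M - 1) = 'X^(p * M) - 1.
Proof.
rewrite mulrC mulnC exprM (subrX1 ('X^M)) /pcyclo; congr (_ * _).
by apply: eq_bigr => t _; rewrite -exprM mulnC.
Qed.

Lemma horner_map_pcyclo (F : numFieldType) p M (x : F) :
  (map_poly ratr (pcyclo p M)).[x] = \sum_(t < p) (x ^+ M) ^+ t.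
Proof.
rewrite /pcyclo rmorph_sum horner_sum; apply: eq_bigr => t _.
by rewrite rmorphXn /= map_polyX hornerXn -exprM mulnC.
Qed.

Lemma horner_sumXn (R : nzRingType) n (b : 'I_n -> nat) :
  (\sum_(i < n) 'X^(b i) : {poly R}).[1] = n%:R.
Proof.
rewrite horner_sum (eq_bigr (fun _ => 1)) ?sumr_const ?card_ord // => i _.
by rewrite hornerXn expr1n.
Qed.

Section PrimePowerCyclotomic.
Variables (p M : nat).
Hypotheses (p_gt1 : (1 < p)%N) (M_gt0 : (0 < M)%N).

Let pM_gt0 : (0 < p * M)%N. Proof. by rewrite muln_gt0 M_gt0 ltnW. Qed.
Let M_lt_pM : (M < p * M)%N. Proof. by rewrite ltn_Pmull. Qed.

Lemma monic_pcyclo : pcyclo p M \is monic.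
Proof.
have := congr1 lead_coef (pcyclo_mulXnsub1 p M).
by rewrite lead_coefM !lead_coefXnsubC // mulr1 => /eqP.
Qed.

Lemma size_pcyclo : size (pcyclo p M) = (p * M - M).+1.
Proof.
have nzXM : ('X^M - 1 : {poly rat}) != 0 by rewrite -size_poly_eq0 size_XnsubC.
have := congr1 (fun q : {poly rat} => size q) (pcyclo_mulXnsub1 p M).
rewrite /= (size_mul (monic_neq0 monic_pcyclo) nzXM) !size_XnsubC //.
by move: (size _) M_lt_pM => n; lia.
Qed.

Lemma root_pcyclo (F : numFieldType) (x : F) :
  (p * M).-primitive_root x -> root (map_poly ratr (pcyclo p M)) x.
Proof.
move=> px; rewrite /root horner_map_pcyclo sum_expr_eq0 //.
  by rewrite -exprM mulnC prim_expr_order.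
by rewrite -(prim_order_dvd px) (gtnNdvd M_gt0 M_lt_pM).
Qed.

Lemma coef_mul_pcyclo (Q : {poly rat}) r : (size Q <= M)%N -> (r < p * M)%N ->
  (Q * pcyclo p M)`_r = Q`_(r %% M).
Proof.
move=> sQ rN; have rM_lt_p : (r %/ M < p)%N by rewrite ltn_divLR.
rewrite /pcyclo mulr_sumr coef_sum (bigD1 (Ordinal rM_lt_p)) //= coefMXn.
rewrite ltnNge leq_divM /= {1}(divn_eq r M) addKn big1 ?addr0 // => t tr.
rewrite coefMXn; case: ltnP => // tMr; apply: nth_default; apply: leq_trans sQ _.
have : (t.+1 * M <= r)%N.
  rewrite -leq_divRL // ltn_neqAle leq_divRL // tMr andbT.
  by apply: contra tr => /eqP e; apply/eqP/val_inj.
by rewrite mulSn; lia.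
Qed.

Lemma pcyclo_dvd_sumXn (b : 'I_p -> nat) : (forall i, b i < p * M)%N ->
  pcyclo p M %| \sum_(i < p) 'X^(b i) ->
  forall i j, i != j -> (b i %% M = b j %% M)%N /\ b i != b j.
Proof.
set P := \sum_(i < p) 'X^(b i) => b_lt dvdP i j ij.
have [Q DP] := dvdpP _ _ dvdP.
have coefP r : P`_r = \sum_(i' < p) (r == b i')%:R.
  by rewrite coef_sum; apply: eq_bigr => i' _; rewrite coefXn.
have coefP_ge1 i' : 1 <= P`_(b i').
  rewrite coefP (le_trans _ (ler_sum_point (fun i2 => (b i' == b i2)%:R) i' _)) //=.
  by rewrite eqxx.
have nzP : P != 0 by apply: contraTneq (coefP_ge1 i) => ->; rewrite coef0 ler10.
have size_P : (size P <= p * M)%N.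
  apply/leq_sizeP => r le_r; rewrite coefP big1 // => i' _.
  by rewrite gtn_eqF // (leq_trans (b_lt i')).
have size_Q : (size Q <= M)%N.
  have nzQ : Q != 0 by apply: contraNneq nzP; rewrite DP => ->; rewrite mul0r.
  move: size_P; rewrite DP (size_mul nzQ (monic_neq0 monic_pcyclo)) size_pcyclo.
  by move: (size Q) M_lt_pM => n; lia.
have coefQ r : (r < p * M)%N -> P`_r = Q`_(r %% M) by rewrite DP; exact: coef_mul_pcyclo.
have sumQ : \sum_(m < M) Q`_m = 1.
  have := congr1 (horner^~ 1) DP; rewrite /= hornerM horner_sumXn horner_sumXn.
  rewrite (horner_coef_wide _ size_Q) -[LHS]mul1r => /mulIf; rewrite pnatr_eq0.
  rewrite gtn_eqF 1?ltnW // => /(_ isT) ->.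
  by apply: eq_bigr => m _; rewrite expr1n mulr1.
have coefQ_ge0 (m : 'I_M) : 0 <= Q`_m.
  rewrite -(modn_small (ltn_ord m)) -coefQ ?(ltn_trans _ M_lt_pM) //.
  by rewrite coefP sumr_ge0 // => i' _; rewrite ler0n.
(* [Q] has nonnegative coefficients summing to [1], and [P`_r = Q`_(r %% M)]
   counts the [i] with [b i = r]: so no two [b i] may differ modulo [M] or
   coincide. *)
pose res i' := Ordinal (ltn_pmod (b i') M_gt0).
have coefP_res i' : P`_(b i') = Q`_(res i') by rewrite coefQ.
split.
  apply/eqP; apply: contraT => neq_res.
  have := ler_sum_pair (fun m : 'I_M => Q`_m) (res i) (res j) coefQ_ge0 neq_res.
  rewrite sumQ -!coefP_res => /(le_trans (lerD (coefP_ge1 i) (coefP_ge1 j))).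
  by rewrite gerDl ler10.
apply/eqP => eq_b.
have := ler_sum_pair (R := rat) (fun i' => (b i == b i')%:R) i j (fun _ => ler0n _ _) ij.
rewrite -coefP eqxx eq_b eqxx coefP_res => /le_trans/(_ (ler_sum_point _ (res j) coefQ_ge0)).
by rewrite sumQ gerDl ler10.
Qed.

Lemma sum_prim_root_eq0 (F : idomainType) (z : F) (b : 'I_p -> nat) :
  (p * M).-primitive_root z -> (forall i, b i < p * M)%N ->
  (forall i j, i != j -> (b i %% M = b j %% M)%N /\ b i != b j) ->
  \sum_(i < p) z ^+ b i = 0.
Proof.
move=> pz b_lt b_cond; pose i0 := Ordinal (ltnW p_gt1); pose c := (b i0 %% M)%N.
have b_mod i : (b i %% M)%N = c.
  by have [-> // | ne] := eqVneq i i0; case: (b_cond _ _ ne).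
have quo_lt i : (b i %/ M < p)%N by rewrite ltn_divLR.
pose quo i := Ordinal (quo_lt i).
have quo_inj : injective quo.
  move=> i j /(congr1 val) /= eq_quo; apply: contraTeq isT => ij.
  by case: (b_cond _ _ ij); rewrite (divn_eq (b i) M) (divn_eq (b j) M) eq_quo !b_mod eqxx.
have -> : \sum_(i < p) z ^+ b i = z ^+ c * \sum_(i < p) (z ^+ M) ^+ quo i.
  rewrite mulr_sumr; apply: eq_bigr => i _.
  by rewrite /= {1}(divn_eq (b i) M) b_mod exprD -exprM mulnC mulrC.
rewrite -(reindex_inj quo_inj (P := xpredT) (F := fun t : 'I_p => (z ^+ M) ^+ t)) sum_expr_eq0 ?mulr0 //.
  by rewrite -exprM mulnC prim_expr_order.
by rewrite -(prim_order_dvd pz) (gtnNdvd M_gt0 M_lt_pM).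
Qed.
End PrimePowerCyclotomic.

Local Notation pQtoC := (map_poly (ratr : rat -> algC)).

Section PcycloMinimal.
Variables (p k : nat).
Hypothesis p_prime : prime p.
Local Notation M := (p ^ k)%N.
Local Notation N := (p ^ k.+1)%N.

Let p_gt1 : (1 < p)%N. Proof. exact: prime_gt1. Qed.
Let M_gt0 : (0 < M)%N. Proof. by rewrite expn_gt0 prime_gt0. Qed.
Let N_pM : N = (p * M)%N. Proof. by rewrite expnS. Qed.

Lemma minCpoly_pcyclo (x : algC) :
  N.-primitive_root x -> minCpoly x = pQtoC (pcyclo p M).
Proof.
move=> px; have [q [Dq mon_q] dvq] := minCpolyP x; rewrite Dq; congr (map_poly _ _).
have q_dvd : q %| pcyclo p M by rewrite -dvq root_pcyclo -?N_pM.
apply/eqP; rewrite -eqp_monic ?monic_pcyclo // -dvdp_size_eqp // size_pcyclo //.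
rewrite -(size_map_poly (ratr : {rmorphism rat -> algC})) -Dq.
rewrite (minCpoly_cyclotomic px) size_cyclotomic totient_pfactor // -N_pM expnS.
by move: (p ^ k)%N M_gt0 p_gt1 => m; case: p => // q' _ _; apply/eqP; lia.
Qed.

Lemma pcyclo_dvd (F : numFieldType) (z : F) (P : {poly rat}) :
  N.-primitive_root z -> root (map_poly ratr P) z -> pcyclo p M %| P.
Proof.
(* [pcyclo p M] and [P] are not coprime, and a common complex root is again a
   primitive root, whose minimal polynomial [pcyclo p M] must divide [P]. *)
move=> pz Pz.
have [z0 pz0] := C_prim_root_exists (prim_order_gt0 pz).
have not_coprime : ~~ coprimep (pcyclo p M) P.
  apply: contraL Pz => cop; rewrite -(coprimep_map (ratr : {rmorphism rat -> F})) in cop.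
  by apply: coprimep_root cop _; rewrite root_pcyclo -?N_pM.
have [x rx rPx] : exists2 x : algC, root (pQtoC (pcyclo p M)) x & root (pQtoC P) x.
  apply: contrapT => no_root; case/negP: not_coprime.
  rewrite -(coprimep_map (ratr : {rmorphism rat -> algC})).
  apply/Pdiv.ClosedField.coprimepP => x rx; apply/negP => rPx.
  by apply: no_root; exists x.
have px : N.-primitive_root x.
  by rewrite -(root_cyclotomic pz0) -(minCpoly_cyclotomic pz0) minCpoly_pcyclo.
have [q [Dq _] dvq] := minCpolyP x.
by move: Dq rPx; rewrite minCpoly_pcyclo // dvq => /map_poly_inj <-.
Qed.

Lemma sum_prim_root_eq0P (F : numFieldType) (z : F) (b : 'I_p -> nat) :
  N.-primitive_root z -> (forall i, b i < N)%N ->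
  \sum_(i < p) z ^+ b i = 0 <->
  (forall i j, i != j -> (b i %% M = b j %% M)%N /\ b i != b j).
Proof.
rewrite N_pM => pz b_lt; split; last exact: sum_prim_root_eq0.
move=> sum0; apply: pcyclo_dvd_sumXn => //; apply: (pcyclo_dvd _ z); rewrite ?N_pM //.
apply/eqP; rewrite -[RHS]sum0 rmorph_sum horner_sum; apply: eq_bigr => i _.
by rewrite rmorphXn /= map_polyX hornerXn.
Qed.
End PcycloMinimal.

Section Expi.
Variable R : realType.
Local Notation expi := (expi R).

Lemma expiD (a b : R) : expi (a + b) = expi a * expi b.
Proof.
apply/eqP; rewrite eq_complex /= cosD sinD.
by rewrite !eqxx /= [sin a * _]mulrC addrC eqxx.
Qed.

Lemma expi0 : expi 0 = 1.
Proof. by rewrite /expi cos0 sin0. Qed.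

Lemma expiMn (t : R) n : expi (t *+ n) = expi t ^+ n.
Proof. by elim: n => [|n IHn]; rewrite ?expi0 // mulrS expiD IHn exprS. Qed.

Lemma expi_neq1 (t : R) : 0 < t < 2 * pi -> expi t != 1.
Proof.
move=> /andP[t_gt0 t_lt2pi]; apply/negP; rewrite eq_complex /= => /andP[/eqP cos1 /eqP sin0].
have [t_ltpi | pi_let] := ltrP t pi.
  by have := @sin_gt0_pi R t; rewrite t_gt0 t_ltpi sin0 ltxx => /(_ isT).
have [t_pi | t_neqpi] := eqVneq t pi; first by move: cos1; rewrite t_pi cospi; lra.
have : 0 < t - pi < pi by apply/andP; split; [rewrite subr_gt0 lt_neqAle eq_sym t_neqpi | lra].
by move/sin_gt0_pi; rewrite sinB cospi sinpi sin0 mulr0 mul0r subr0 ltxx.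
Qed.

Lemma expi_2pi_frac n m : expi (2 * pi / n%:R) ^+ m = expi (2 * pi * (m%:R / n%:R)).
Proof. by rewrite -expiMn -mulr_natr; congr (expi _); ring. Qed.

Lemma prim_root_expi n : (0 < n)%N -> n.-primitive_root (expi (2 * pi / n%:R)).
Proof.
move=> n_gt0; apply/andP; split => //; apply/forallP => i; rewrite unity_rootE.
rewrite expi_2pi_frac; have [-> | i_neq] := eqVneq i.+1 n.
  by rewrite divff ?pnatr_eq0 -?lt0n // mulr1 mulr_natl /expi cos2pi sin2pi eqxx.
rewrite eqbF_neg expi_neq1 // mulr_gt0 ?divr_gt0 ?ltr0n ?mulr_gt0 ?pi_gt0 //=.
by rewrite gtr_pMr ?mulr_gt0 ?pi_gt0 // ltr_pdivrMr ?ltr0n // mul1r ltr_nat ltn_neqAle i_neq /=.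
Qed.
End Expi.

Section PadicIntegers.
Context {p : nat}.
Implicit Types x y u w : nat -> nat.

Lemma is_zp_p_gt0 {x} : is_zp p x -> (0 < p)%N.
Proof. by case/(_ 1%N); rewrite expn1; case: p. Qed.

Lemma zp_modn {x n m} : is_zp p x -> (n <= m)%N -> (x m %% p ^ n)%N = x n.
Proof.
move=> hx; elim: m => [|m IHm]; first by rewrite leqn0 => /eqP ->; rewrite modn_small; case: (hx 0%N).
rewrite leq_eqVlt => /orP[/eqP <- | lt_nm]; first by rewrite modn_small; case: (hx n).
by rewrite -(IHm lt_nm) -(proj2 (hx m)) modn_dvdm // dvdn_exp2l.
Qed.

Lemma is_zp_mul {x y} : is_zp p x -> is_zp p y -> is_zp p (zp_mul p x y).
Proof.
move=> hx hy n; split; first by rewrite ltn_pmod // expn_gt0 (is_zp_p_gt0 hx).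
by rewrite /zp_mul modn_dvdm ?dvdn_exp2l // -modnMm (zp_modn hx (leqnSn n)) (zp_modn hy (leqnSn n)) ?modnMm.
Qed.

Lemma is_zp_sub {x y} : is_zp p x -> is_zp p y -> is_zp p (zp_sub p x y).
Proof.
move=> hx hy n; have p_gt0 := is_zp_p_gt0 hx.
split; first by rewrite ltn_pmod // expn_gt0 p_gt0.
rewrite /zp_sub modn_dvdm ?dvdn_exp2l // -modnDml (zp_modn hx (leqnSn n)).
have [y_lt _] := hy n.+1; have [yn_lt y_mod] := hy n.
set P := (p ^ n)%N in yn_lt y_mod *; set c := (y n.+1 %/ P)%N.
have c_lt : (c < p)%N by rewrite ltn_divLR ?expn_gt0 ?p_gt0 // /P -expnS.
have Dy : y n.+1 = (c * P + y n)%N by rewrite -y_mod -divn_eq.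
have -> : (p ^ n.+1 - y n.+1 = (p - c.+1) * P + (P - y n))%N.
  by rewrite expnS -/P Dy; nia.
by rewrite addnCA modnMDl.
Qed.

Lemma zp_mul_sub_eq0 {x y u n m} : is_zp p x -> is_zp p y -> is_zp p u -> (n <= m)%N ->
  (zp_mul p (zp_sub p x y) u n == 0)%N = (x m * u m == y m * u m %[mod p ^ n])%N.
Proof.
move=> hx hy hu le_nm; rewrite /zp_mul /zp_sub modnMml.
have y_le : (y n <= p ^ n)%N by case: (hy n) => /ltnW.
have E : (y n * u n + (p ^ n - y n) * u n = p ^ n * u n)%N by rewrite -mulnDl subnKC.
rewrite mulnDl; transitivity (x n * u n + (p ^ n - y n) * u n
  == y n * u n + (p ^ n - y n) * u n %[mod p ^ n])%N; first by rewrite E modnMr.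
by rewrite eqn_modDr -(zp_modn hx le_nm) -(zp_modn hy le_nm) -(zp_modn hu le_nm) !modnMm.
Qed.

Lemma pnat_expr_div_eqp (p_gt1 : (1 < p)%N) k v :
  (p%:R ^+ k / p%:R ^+ v = p%:R :> rat) <-> k = v.+1.
Proof.
have p_neq0 : (p%:R : rat) != 0 by rewrite pnatr_eq0 gtn_eqF // ltnW.
split=> [|->]; last by rewrite exprS mulrK // unitfE expf_neq0.
move/(congr1 ( *%R^~ (p%:R ^+ v))); rewrite divfK ?expf_neq0 // -exprS -!natrX.
by move/eqP; rewrite eqr_nat eqn_exp2l // => /eqP.
Qed.

Lemma qp_abs_eq_p k w : prime p -> is_zp p w ->
  qp_abs p (mkQp k w) = p%:R <-> [/\ 0 < k, w k != 0 & w k.-1 = 0]%N.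
Proof.
move=> p_prime hw.
have w0 : w 0%N = 0%N by case: (hw 0%N); rewrite expn0; case: (w 0%N).
have w_le n n' : (n' <= n)%N -> w n = 0%N -> w n' = 0%N.
  by move=> le_n wn; rewrite -(zp_modn hw le_n) wn mod0n.
rewrite /qp_abs /=; case: ClassicalEpsilon.excluded_middle_informative => [w_nz | w_eq0]; last first.
  split=> [/esym/eqP | [k_gt0 wk _]]; first by rewrite pnatr_eq0 (gtn_eqF (prime_gt0 p_prime)).
  by case: w_eq0; exists k.-1; rewrite prednK.
rewrite /zp_val; case: ClassicalEpsilon.excluded_middle_informative => [w_nz' | //].
case: ex_minnP => v wv v_min; rewrite pnat_expr_div_eqp ?prime_gt1 //.
split=> [-> | [k_gt0 wk wk1]]; first split => //.
  by case: v wv v_min => // v wv v_min; apply/eqP; apply: contraT => /v_min; rewrite ltnn.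
have le_vk : (v <= k.-1)%N by apply: v_min; rewrite prednK.
suff /eqP -> : v == k.-1 by rewrite prednK.
rewrite eqn_leq le_vk leqNgt; apply/negP => lt_kv.
by move: wv; rewrite (w_le _ _ lt_kv wk1).
Qed.

Lemma qp_abs_mul_sub_eq_p x y u k : prime p -> is_zp p x -> is_zp p y -> is_zp p u ->
  qp_abs p (zq_mul p (zp_sub p x y) (mkQp k.+1 u)) = p%:R <->
  (x k.+1 * u k.+1 == y k.+1 * u k.+1 %[mod p ^ k]) &&
  (x k.+1 * u k.+1 != y k.+1 * u k.+1 %[mod p ^ k.+1]).
Proof.
move=> p_prime hx hy hu; rewrite qp_abs_eq_p //=; last exact: is_zp_mul (is_zp_sub hx hy) hu.
rewrite -(zp_mul_sub_eq0 hx hy hu (leqnn k.+1)) -(zp_mul_sub_eq0 hx hy hu (leqnSn k)).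
by split=> [[_ -> /eqP ->] | /andP[/eqP -> ->]].
Qed.
End PadicIntegers.

Lemma muS_hat_eq0P (R : realType) p (s : 'I_p -> nat -> nat) k u :
  muS_hat R p s (mkQp k u) = 0 <->
  \sum_(i < p) expi R (2 * pi / (p ^ k)%N%:R) ^+ zp_mul p (s i) u k = 0.
Proof.
have chiE i : chi R p (zq_mul p (s i) (mkQp k u)) =
    expi R (2 * pi / (p ^ k)%N%:R) ^+ zp_mul p (s i) u k.
  by rewrite /chi /qp_frac /= expi_2pi_frac fmorph_div /= !ratr_nat.
rewrite /muS_hat (eq_bigr _ (fun i _ => congr1 _ (chiE i))) -rmorph_sum.
by split=> [/eqP | ->]; rewrite ?conjc_eq0 ?rmorph0 // => /eqP.
Qed.

Theorem lemma2p4 (R : realType) (p : nat) (hp : prime p)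
    (s : 'I_p -> nat -> nat) (hs : forall i, is_zp p (s i))
    (hinj : injective s)
    (xi : QpRep) (hxi : is_qp p xi) :
  muS_hat R p s xi = 0 <->
  (forall i j : 'I_p, i != j ->
     qp_abs p (zq_mul p (zp_sub p (s i) (s j)) xi) = p%:R).
Proof.
case: xi hxi => k u; rewrite /is_qp /= muS_hat_eq0P => hu.
case: k => [|k].
  have abs_neq i j : qp_abs p (zq_mul p (zp_sub p (s i) (s j)) (mkQp 0 u)) != p%:R.
    by apply/eqP; rewrite /zq_mul qp_abs_eq_p //=; [case | exact: is_zp_mul (is_zp_sub (hs i) (hs j)) hu].
  split=> [|all_p]; last first.
    by have /eqP[] := abs_neq (Ordinal (prime_gt0 hp)) (Ordinal (prime_gt1 hp)); apply: all_p.
  under eq_bigr => i _ do rewrite /zp_mul expn0 modn1 expr0.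
  by rewrite sumr_const card_ord => /eqP; rewrite pnatr_eq0 gtn_eqF ?prime_gt0.
rewrite (sum_prim_root_eq0P _ k hp) ?prim_root_expi ?expn_gt0 ?prime_gt0 //; last first.
  by move=> i; rewrite /zp_mul ltn_pmod ?expn_gt0 ?prime_gt0.
have pair i j : ((zp_mul p (s i) u k.+1 %% p ^ k = zp_mul p (s j) u k.+1 %% p ^ k)%N /\
    zp_mul p (s i) u k.+1 != zp_mul p (s j) u k.+1) <->
    qp_abs p (zq_mul p (zp_sub p (s i) (s j)) (mkQp k.+1 u)) = p%:R.
  rewrite qp_abs_mul_sub_eq_p // /zp_mul !modn_dvdm ?dvdn_exp2l //.
  by split=> [[/eqP -> ->] | /andP[/eqP -> ->]].
by split=> H i j ij; apply/pair/H.
Qed.
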